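(* Let $\mathcal{S}$ be a set of triangles in a graph with $|\mathcal{S}|>1$ such that every two distinct triangles $t,t'\in\mathcal{S}$ satisfy $|E(t)\cap E(t')|=1$. Then either $|\bigcap_{t\in\mathcal{S}}E(t)|=1$, or $|\mathcal{S}|\leq 4$ and the vertex set $\bigcup_{t\in\mathcal{S}}V(t)$ induces a $K_4$.
   Context: A triangle is a set of three pairwise adjacent vertices of a simple graph; $V(t)$ and $E(t)$ denote its vertex set and its set of three edges. *)

From mathcomp Require Import all_boot.
Set Implicit Arguments. Unset Strict Implicit. Unset Printing Implicit Defensive.

Definition simple_graph (T : finType) (g : rel T) : Prop :=
  symmetric g /\ irreflexive g.

Definition is_triangle (T : finType) (g : rel T) (t : {set T}) : bool :=
  (#|t| == 3) && [forall x in t, forall y in t, (x != y) ==> g x y].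

(* V(t) = t; E(t) = its three edges = the 2-element subsets of t. *)
Definition tri_edges (T : finType) (t : {set T}) : {set {set T}} :=
  [set f : {set T} | (f \subset t) && (#|f| == 2)].

Definition induces_K4 (T : finType) (g : rel T) (X : {set T}) : Prop :=
  #|X| = 4 /\ {in X &, forall x y, x != y -> g x y}.

From mathcomp Require Import all_boot.

Set Implicit Arguments.
Unset Strict Implicit.
Unset Printing Implicit Defensive.

(* Two distinct triangles sharing exactly one edge share exactly two vertices,
   and the condition |⋂ E(t)| = 1 says that all triangles share the same two
   vertices.  Otherwise pick t1 ≠ t2 with common pair e and a triangle t3 ⊉ e:
   counting |t ∩ t1| + |t ∩ t2| = |t ∩ (t1 ∪ t2)| + |t ∩ e| shows that t3, and
   then every triangle, lies in the 4-set t1 ∪ t2, which is therefore covered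
   by at most four triangles; each pair of its vertices lies in t1, t2 or t3. *)

Lemma card_tri_edges (T : finType) (t : {set T}) : #|tri_edges t| = 'C(#|t|, 2).
Proof. exact: cards_draws. Qed.

Lemma tri_edgesI (T : finType) (t t' : {set T}) :
  tri_edges t :&: tri_edges t' = tri_edges (t :&: t').
Proof. by apply/setP => f; rewrite !inE subsetI andbACA andbb. Qed.

Lemma bigcap_tri_edges (T : finType) (S : {set {set T}}) t0 : t0 \in S ->
  \bigcap_(t in S) tri_edges t = tri_edges (\bigcap_(t in S) t).
Proof.
move=> t0S; apply/setP => f; rewrite inE.
apply/bigcapP/andP => [f_in | [fS f2] t tS].
  by split; [apply/bigcapsP => t /f_in | have := f_in t0 t0S]; rewrite inE => /andP[].
by rewrite inE f2 (subset_trans fS) ?bigcap_inf.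
Qed.

Lemma bin2_eq1 n : ('C(n, 2) == 1) = (n == 2).
Proof.
case: n => [|[|[|n]]] //; apply/negbTE; rewrite neq_ltn orbC.
by rewrite (leq_trans _ (leq_bin2l 2 (_ : 3 <= n.+3))).
Qed.

Lemma triangle_adj (T : finType) (g : rel T) t x y :
  is_triangle g t -> x \in t -> y \in t -> x != y -> g x y.
Proof. by case/andP=> _ /forall_inP adj /adj /forall_inP adj_x /adj_x /implyP. Qed.

Lemma card_setI_lt (T : finType) (A B : {set T}) :
  ~~ (B \subset A) -> #|A :&: B| < #|B|.
Proof.
by move=> BA; apply: proper_card; rewrite properE subsetIr subsetI subxx andbT.
Qed.

Lemma subsetU_card_meets (T : finType) (t A B : {set T}) :
  #|t| + #|t :&: (A :&: B)| <= #|t :&: A| + #|t :&: B| -> t \subset A :|: B.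
Proof.
rewrite -[#|t :&: A| + _]cardsUI -setIUr -setIIr leq_add2r.
by rewrite (geq_leqif (subset_leqif_card (subsetIl _ _))) subsetI => /andP[].
Qed.

Lemma eq_setD1_card (T : finType) (t U : {set T}) x :
  t \subset U -> x \in U -> x \notin t -> #|U| = #|t|.+1 -> t = U :\ x.
Proof.
move=> tU xU xt cardU; apply/eqP; rewrite eqEcard subsetD1 tU xt.
by move: cardU; rewrite (cardsD1 x U) xU add1n => -[->] /=.
Qed.

Section TriplesMeetingInPairs.

Variables (T : finType) (S : {set {set T}}).
Hypothesis card3 : {in S, forall t : {set T}, #|t| = 3}.
Hypothesis meet2 : {in S &, forall t t', t != t' -> #|t :&: t'| = 2}.

Variables t1 t2 : {set T}.
Hypotheses (t1S : t1 \in S) (t2S : t2 \in S) (t1_neq_t2 : t1 != t2).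

Let e := t1 :&: t2.
Let U := t1 :|: t2.

Lemma card_core : #|e| = 2.
Proof. exact: meet2. Qed.

Lemma card_span : #|U| = 4.
Proof. by apply/eqP; rewrite -(eqn_add2r #|e|) cardsUI card_core !card3. Qed.

Lemma core_sub_span : e \subset U.
Proof. exact: subset_trans (subsetIl _ _) (subsetUl _ _). Qed.

Lemma bigcap_eq_core : {in S, forall t : {set T}, e \subset t} -> \bigcap_(t in S) t = e.
Proof.
move=> e_sub; apply/eqP; rewrite eqEsubset subsetI !bigcap_inf //=.
exact/bigcapsP.
Qed.

Lemma subset_span_of_not_core t : t \in S -> ~~ (e \subset t) -> t \subset U.
Proof.
move=> tS et; have t_neq (u : {set T}) : e \subset u -> t != u.
  by move=> eu; apply: contraNneq et => ->.
apply: subsetU_card_meets.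
rewrite card3 // (meet2 tS t1S) ?(meet2 tS t2S) ?t_neq ?subsetIl ?subsetIr //.
by have := card_setI_lt et; rewrite card_core.
Qed.

Variable t3 : {set T}.
Hypotheses (t3S : t3 \in S) (core_not_sub_t3 : ~~ (e \subset t3)).

Lemma subset_span t : t \in S -> t \subset U.
Proof.
move=> tS; have [et | ] := boolP (e \subset t); last exact: subset_span_of_not_core.
have t3U := subset_span_of_not_core t3S core_not_sub_t3.
have [-> // | t_neq_t3] := eqVneq t t3.
have et3 : #|e :&: t3| <= 1 by rewrite setIC -ltnS -card_core card_setI_lt.
apply: subset_trans (_ : e :|: t3 \subset U); last first.
  by rewrite subUset t3U core_sub_span.
apply: subsetU_card_meets; rewrite card3 // (setIidPr et) card_core (meet2 tS t3S) //.
by rewrite -[2 + 2]/(3 + 1) leq_add2l (leq_trans _ et3) ?subset_leq_card ?subsetIr.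
Qed.

Lemma bigcup_eq_span : \bigcup_(t in S) t = U.
Proof.
apply/eqP; rewrite eqEsubset /U subUset !bigcup_sup //= andbT.
by apply/bigcupsP => t /subset_span.
Qed.

Lemma card_family_le4 : #|S| <= 4.
Proof.
rewrite -[4]/'C(4, 3) -card_span -cards_draws subset_leq_card //.
by apply/subsetP => t tS; rewrite inE subset_span // card3.
Qed.

Lemma mem_t3 z : z \in U -> z \notin e -> z \in t3.
Proof.
move=> zU ze; apply: contraNT core_not_sub_t3 => zt3.
rewrite (eq_setD1_card (subset_span t3S) zU zt3); last by rewrite card_span card3.
by rewrite subsetD1 core_sub_span ze.
Qed.

Lemma pair_in_family x y : x \in U -> y \in U ->
  exists2 t, t \in S & (x \in t) && (y \in t).
Proof.
have in_t12 z w : z \in e -> w \in U -> exists2 t, t \in S & (z \in t) && (w \in t).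
  rewrite !inE => /andP[z1 z2] /orP[w1 | w2].
    by exists t1; rewrite ?z1 ?w1.
  by exists t2; rewrite ?z2 ?w2.
move=> xU yU; have [/in_t12 | xe] := boolP (x \in e); first exact.
have [ye | ye] := boolP (y \in e).
  by have [t tS /andP[yt xt]] := in_t12 _ _ ye xU; exists t; rewrite ?xt.
by exists t3; rewrite ?mem_t3.
Qed.

End TriplesMeetingInPairs.

Theorem claim22 (T : finType) (g : rel T) (S : {set {set T}}) :
  simple_graph g ->
  {in S, forall t, is_triangle g t} ->
  1 < #|S| ->
  {in S &, forall t t', t != t' -> #|tri_edges t :&: tri_edges t'| = 1} ->
  #|\bigcap_(t in S) tri_edges t| = 1 \/
  (#|S| <= 4 /\ induces_K4 g (\bigcup_(t in S) t)).
Proof.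
move=> _ tri /card_gt1P[t1 [t2 [t1S t2S t1_neq_t2]]] one_edge.
have card3 t : t \in S -> #|t| = 3 by case/tri/andP=> /eqP.
have meet2 t t' : t \in S -> t' \in S -> t != t' -> #|t :&: t'| = 2.
  move=> tS t'S /(one_edge t t' tS t'S)/eqP.
  by rewrite tri_edgesI card_tri_edges bin2_eq1 => /eqP.
have [core_sub | ] := boolP [forall t in S, t1 :&: t2 \subset t].
  left; rewrite (bigcap_tri_edges t1S) card_tri_edges.
  by rewrite (bigcap_eq_core t1S t2S (elimT forall_inP core_sub)) (card_core meet2).
rewrite negb_forall_in => /exists_inP[t3 t3S core_not_sub_t3].
right; split.
  exact: (card_family_le4 card3 meet2 t1S t2S t1_neq_t2 t3S core_not_sub_t3).
rewrite (bigcup_eq_span card3 meet2 t1S t2S t1_neq_t2 t3S core_not_sub_t3).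
split; first exact: (card_span card3 meet2 t1S t2S t1_neq_t2).
move=> x y xU yU x_neq_y.
have [t tS /andP[xt yt]] :=
  pair_in_family card3 meet2 t1S t2S t1_neq_t2 t3S core_not_sub_t3 xU yU.
exact: triangle_adj (tri t tS) xt yt x_neq_y.
Qed.
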